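(* Consider the Bak–Sneppen model on a finite connected simple graph $G$ with parameter $p\in(0,1)$, realized via the graphical construction, and fix $L>0$, $k\in\mathbb Z_+$ and adjacent vertices $x\sim y$. If the level-$k$ block $\{x,y\}\times((k-1)L,kL]$ is nice and at least one of $\eta_x((k-1)L)$, $\eta_y((k-1)L)$ equals $0$, then $\eta_x(kL)=\eta_y(kL)=0$.
   Context: Let $G=(V,E)$ be a finite connected simple graph and $p\in(0,1)$. Graphical construction of the Bak–Sneppen model: each vertex $x$ carries an independent rate-$1$ Poisson clock; each ring of the clock at $x$ carries a mark, namely a family of independent Bernoulli$(p)$ values, one for each vertex of the neighbourhood $\{x\}\cup\{y:y\sim x\}$ (marks independent across rings). When the clock at $x$ rings at a time when $\eta_x=0$, or when $\eta_y=1$ for all $y\in V$, the values $\eta_z$ on the neighbourhood of $x$ are set equal to the mark values; otherwise (the ring is ''muted'') nothing happens. For $x\in V$ and $k\in\mathbb Z_+$, the level-$k$ $x$-stick is $\{x\}\times((k-1)L,kL]$. For $A\subseteq\{x\}\cup\{y:y\sim x\}$, the $x$-stick is $A$-good if every clock ring at $x$ during $((k-1)L,kL]$ has mark value $0$ at every vertex of $A$ (a stick with no rings is good). For $x\sim y$, the level-$k$ block $\{x,y\}\times((k-1)L,kL]$ is nice if: (a) the clocks at $x$ and at $y$ each ring at least once during $((k-1)L,kL]$; (b) both the $x$-stick and the $y$-stick are $\{x,y\}$-good; (c) for every $v\sim x$ the $v$-stick is $\{x\}$-good and for every $w\sim y$ the $w$-stick is $\{y\}$-good, and if $v$ is adjacent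 to both $x$ and $y$ then the $v$-stick is $\{x,y\}$-good (all sticks at level $k$). *)

From HB Require Import structures.
From mathcomp Require Import all_boot all_order all_algebra.
From mathcomp Require Import reals.
Set Implicit Arguments. Unset Strict Implicit. Unset Printing Implicit Defensive.
Import Order.TTheory GRing.Theory Num.Theory.
Local Open Scope ring_scope.

Section BakSneppen.
Variable T : finType.
Variable R : realType.

(* A configuration; [true] encodes the value 1, [false] the value 0. *)
Definition config := T -> bool.

(* A clock ring: its time, the vertex whose clock rings, and its mark
   (Bernoulli values; only the values on the closed neighbourhood are used). *)
Record event := Event { ev_time : R; ev_vertex : T; ev_mark : T -> bool }.

Definition nbhd (e : rel T) (x : T) : pred T := fun z => (z == x) || e x z.

Definition bs_step (e : rel T) (eta : config) (ev : event) : config :=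
  let x := ev_vertex ev in
  if (~~ eta x) || [forall z, eta z]
  then fun z => if nbhd e x z then ev_mark ev z else eta z
  else eta.

(* Configuration at time t, starting from eta0 at the start of the window,
   when evs lists (chronologically) the rings of the window. *)
Definition config_at (e : rel T) (evs : seq event) (eta0 : config) (t : R) : config :=
  foldl (bs_step e) eta0 [seq ev <- evs | ev_time ev <= t].

Definition stick_good (evs : seq event) (x : T) (A : pred T) : bool :=
  all (fun ev => (ev_vertex ev == x) ==> [forall a, A a ==> ~~ ev_mark ev a]) evs.

Definition rings_at (evs : seq event) (x : T) : bool :=
  has (fun ev => ev_vertex ev == x) evs.

Definition nice (e : rel T) (evs : seq event) (x y : T) : Prop :=
  (rings_at evs x /\ rings_at evs y) /\
  (stick_good evs x (pred2 x y) /\ stick_good evs y (pred2 x y)) /\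
  ((forall v, e v x -> stick_good evs v (pred1 x)) /\
   (forall w, e w y -> stick_good evs w (pred1 y)) /\
   (forall v, e v x -> e v y -> stick_good evs v (pred2 x y))).

End BakSneppen.

From mathcomp Require Import all_boot all_order all_algebra.
From mathcomp Require Import reals.
Import Order.TTheory GRing.Theory Num.Theory.
Local Open Scope ring_scope.
Set Implicit Arguments. Unset Strict Implicit.

(* On a nice block no ring in the window can turn x or y from 0 to 1, so
   "eta_x = 0 or eta_y = 0" holds throughout the window.  At a ring of x this
   forces eta_y to 0: either eta_x = 0, the ring is active and writes the
   mark 0 at y, or eta_x = 1 and then eta_y is already 0.  Since y is never
   raised afterwards, eta_y(kL) = 0; symmetrically, a ring of y gives
   eta_x(kL) = 0. *)

Section NoRaise.
Variables (T : finType) (R : realType) (e : rel T).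

Definition cannot_raise (z : T) (ev : event T R) : bool :=
  nbhd e (ev_vertex ev) z ==> ~~ ev_mark ev z.

Lemma bs_step_cannot_raise (eta : config T) ev z :
  cannot_raise z ev -> bs_step e eta ev z -> eta z.
Proof.
rewrite /cannot_raise /bs_step; case: ifP => _ //.
by case: (nbhd e (ev_vertex ev) z) => //= /negbTE ->.
Qed.

Lemma foldl_cannot_raise (s : seq (event T R)) (eta : config T) z :
  all (cannot_raise z) s -> foldl (bs_step e) eta s z -> eta z.
Proof.
elim: s eta => [|ev s IHs] eta //= /andP[ev_z s_z] /(IHs _ s_z).
exact: bs_step_cannot_raise.
Qed.

Lemma bs_step_ring_zero (eta : config T) ev x y :
  ev_vertex ev = x -> e x y -> cannot_raise y ev -> ~~ eta x || ~~ eta y ->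
  ~~ bs_step e eta ev y.
Proof.
move=> ev_x xy; rewrite /cannot_raise /bs_step ev_x.
have nbhd_xy : nbhd e x y by rewrite /nbhd xy orbT.
rewrite nbhd_xy /= => mark_y; case: ifP => [_ | /negbT]; first by rewrite /= nbhd_xy.
by rewrite negb_or negbK => /andP[-> _].
Qed.

Lemma foldl_ring_zero (s : seq (event T R)) (eta : config T) x y :
  e x y -> all (cannot_raise x) s -> all (cannot_raise y) s ->
  rings_at s x -> ~~ eta x || ~~ eta y ->
  ~~ foldl (bs_step e) eta s y.
Proof.
move=> xy; elim: s eta => [|ev s IHs] eta //=.
case/andP=> ev_x s_x /andP[ev_y s_y] /orP[/eqP ring_x | rings_x] eta_xy.
  apply: contra (bs_step_ring_zero ring_x xy ev_y eta_xy).
  exact: foldl_cannot_raise.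
apply: IHs => //; case/orP: eta_xy => eta_z; apply/orP; [left | right];
  apply: contra eta_z; exact: bs_step_cannot_raise.
Qed.

Lemma stick_good_cannot_raise (s : seq (event T R)) z (A : pred T) :
  A z -> stick_good s z A -> (forall v, e v z -> stick_good s v (pred1 z)) ->
  all (cannot_raise z) s.
Proof.
move=> Az; elim: s => [|ev s IHs] //= /andP[good_z good_s] good_nbrs.
apply/andP; split; last by apply: IHs => // v vz; case/andP: (good_nbrs v vz).
apply/implyP => /orP[/eqP z_ev | vz].
  by move: good_z; rewrite -z_ev eqxx => /forallP/(_ z); rewrite Az.
case/andP: (good_nbrs _ vz); rewrite eqxx => /forallP/(_ z) /= + _.
by rewrite eqxx.
Qed.

End NoRaise.

Lemma config_at_after_window (T : finType) (R : realType) (e : rel T)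
    (evs : seq (event T R)) (eta0 : config T) (t : R) :
  all (fun ev => ev_time ev <= t) evs ->
  config_at e evs eta0 t = foldl (bs_step e) eta0 evs.
Proof. by move=> /all_filterP; rewrite /config_at => ->. Qed.

Theorem proposition1 (T : finType) (R : realType) (e : rel T)
  (e_sym : symmetric e) (e_irr : irreflexive e)
  (e_conn : forall u v : T, connect e u v)
  (L : R) (L_pos : 0 < L) (k : nat) (k_pos : (0 < k)%N)
  (evs : seq (event T R))
  (evs_window : all (fun ev => ((k.-1)%:R * L < ev_time ev) && (ev_time ev <= k%:R * L)) evs)
  (evs_sorted : sorted (fun a b => ev_time a < ev_time b) evs)
  (eta0 : config T) (x y : T) (xy : e x y)
  (Hnice : nice e evs x y)
  (H0 : ~~ eta0 x || ~~ eta0 y) :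
  ~~ config_at e evs eta0 (k%:R * L) x && ~~ config_at e evs eta0 (k%:R * L) y.
Proof.
rewrite config_at_after_window; last first.
  by apply: sub_all evs_window => ev /andP[].
(* The clause on common neighbours of x and y follows from the other two. *)
case: Hnice => [[rings_x rings_y] [[good_x good_y] [good_nx [good_ny _]]]].
have no_raise_x : all (cannot_raise e x) evs.
  by apply: (stick_good_cannot_raise (A := pred2 x y)); rewrite //= eqxx.
have no_raise_y : all (cannot_raise e y) evs.
  by apply: (stick_good_cannot_raise (A := pred2 x y)); rewrite //= eqxx orbT.
have yx : e y x by rewrite e_sym.
apply/andP; split; last exact: (foldl_ring_zero (x := x)).
by rewrite orbC in H0; exact: (foldl_ring_zero (x := y)).
Qed.
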